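(* For every $n\ge 2$ we have $C_n=P_n^2$, where $C_n=\prod_{\sigma\in G_n}(\sigma(\mathrm{EC}_n)-1)$ and $P_n=\prod_{\sigma\in G_{n-1}}\bigl(x_n-\sigma(\mathrm{EC}_{n-1}(x_1,\dots,x_{n-1}))\bigr)$.
   Context: Let $x_1,\dots,x_n$ be algebraically independent indeterminates over $\mathbb{Q}$; in an algebraic closure of $\mathbb{Q}(x_1,\dots,x_n)$ fix $y_1,\dots,y_n$ with $y_i^2=1-x_i^2$. For indices $i_1<\dots<i_m$, $\mathrm{EC}_m(x_{i_1},\dots,x_{i_m})=\sum_{S\subseteq\{i_1,\dots,i_m\},\ |S|\text{ even}}(-1)^{|S|/2}\prod_{j\in S}y_j\prod_{j\notin S}x_j$, and $\mathrm{EC}_n=\mathrm{EC}_n(x_1,\dots,x_n)$. $G_n$ is the Galois group of $\mathbb{Q}(x_1,\dots,x_n,\ y_iy_j:1\le i<j\le n)$ over $\mathbb{Q}(x_1,\dots,x_n)$, and $G_{n-1}$ is the Galois group of $\mathbb{Q}(x_1,\dots,x_n,\ y_iy_j:1\le i<j\le n-1)$ over $\mathbb{Q}(x_1,\dots,x_n)$ (trivial when $n=2$). Note $\mathrm{EC}_m$ involves only even products of the $y_j$, hence lies in these fields. *)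

From HB Require Import structures.
From mathcomp Require Import all_boot all_order all_algebra.
Set Implicit Arguments. Unset Strict Implicit. Unset Printing Implicit Defensive.
Import Order.TTheory GRing.Theory Num.Theory.
Local Open Scope ring_scope.

(* Indexing convention: the paper's x_1,...,x_n, y_1,...,y_n are
   represented by x 0, ..., x (n-1) and y 0, ..., y (n-1), with
   x y : nat -> L.  So x_n is x n.-1. *)
Definition sgnb {L : comNzRingType} (b : bool) : L := if b then -1 else 1.

(* The image under the Galois element attached to the sign vector e of
   EC_m(x_1,...,x_m): the automorphism acts by y_j |-> (-1)^(e j) y_j and
   fixes the x_j. *)
Definition ECsig {L : comNzRingType} (m : nat) (x y : nat -> L)
    (e : {ffun 'I_m -> bool}) : L :=
  \sum_(S : {set 'I_m} | ~~ odd #|S|)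
     (-1) ^+ (#|S|./2) * \prod_(j in S) (sgnb (e j) * y (val j))
                       * \prod_(j in ~: S) x (val j).

Definition EC {L : comNzRingType} (m : nat) (x y : nat -> L) : L :=
  @ECsig L m x y [ffun _ => false].

(* The Galois group G_m of Q(x, y_i y_j : i<j<=m) over Q(x) (x algebraically
   independent) is {+-1}^m / {+-1}, acting by y_j |-> eps_j y_j (the global
   sign -1 acts trivially on the even products y_i y_j).  Gal m is the set
   of sign vectors with first sign +1, i.e. one representative per element
   of G_m (for m <= 1 it is a single element: the trivial group). *)
Definition Gal (m : nat) : {set {ffun 'I_m -> bool}} :=
  [set e : {ffun 'I_m -> bool} | [forall i : 'I_m, (val i == 0)%N ==> ~~ e i]].

Definition Cn {L : comNzRingType} (n : nat) (x y : nat -> L) : L :=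
  \prod_(e in Gal n) (@ECsig L n x y e - 1).

Definition Pn {L : comNzRingType} (n : nat) (x y : nat -> L) : L :=
  \prod_(e in Gal n.-1) (x n.-1 - @ECsig L n.-1 x y e).

(* Write x_j = cos t_j and the (signed) y_j = sin t_j.  Splitting the
   defining sum of EC_m by the parity of |S| gives the pair
   (cos (t_1 + ... + t_m), sin (t_1 + ... + t_m)); formally this pair obeys
   the angle-addition recurrence and has squared norm 1.  The elements of
   G_n come in pairs differing only in the sign of y_n; for such a pair,
   with a, b the cosine and sine of the first n-1 angles,
     (x_n a - y_n b - 1) (x_n a + y_n b - 1) = (x_n - a)^2,
   and a is exactly sigma(EC_{n-1}) for the corresponding sigma in G_{n-1}. *)
From HB Require Import structures.
From mathcomp Require Import all_boot all_order all_algebra.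
From mathcomp Require Import ring.

Set Implicit Arguments.
Unset Strict Implicit.
Unset Printing Implicit Defensive.

Import GRing.Theory.
Local Open Scope ring_scope.

Section ExtendOrd.
Variable m : nat.

Lemma val_lift_max (j : 'I_m) : val (lift ord_max j) = val j.
Proof. exact: lift_max. Qed.

Lemma big_ord_recr_in (R : Type) (idx : R) (op : Monoid.com_law idx)
    (A : {pred 'I_m.+1}) (F : 'I_m.+1 -> R) :
  \big[op/idx]_(i in A) F i =
  op (\big[op/idx]_(j < m | lift ord_max j \in A) F (lift ord_max j))
     (if ord_max \in A then F ord_max else idx).
Proof.
rewrite big_mkcond big_ord_recr /= [in RHS]big_mkcond; congr (op _ _).
apply: eq_bigr => j _.
have -> // : widen_ord (leqnSn m) j = lift ord_max j.
by apply: val_inj; rewrite val_lift_max.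
Qed.

Definition extend_set (q : {set 'I_m} * bool) : {set 'I_m.+1} :=
  [set i | if unlift ord_max i is Some j then j \in q.1 else q.2].

Definition restrict_set (S : {set 'I_m.+1}) : {set 'I_m} * bool :=
  ([set j | lift ord_max j \in S], ord_max \in S).

Lemma extend_set_bij : bijective extend_set.
Proof.
exists restrict_set => [[S b]|S].
  by congr pair; [apply/setP => j|]; rewrite !inE ?liftK ?unlift_none.
by apply/setP => i; rewrite inE; case: unliftP => [j ->|->]; rewrite ?inE.
Qed.

Lemma lift_max_in_extend_set S b j :
  (lift ord_max j \in extend_set (S, b)) = (j \in S).
Proof. by rewrite inE liftK. Qed.

Lemma max_in_extend_set S b : (ord_max \in extend_set (S, b)) = b.
Proof. by rewrite inE unlift_none. Qed.

Lemma card_extend_set S b : #|extend_set (S, b)| = (#|S| + b)%N.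
Proof.
rewrite -!sum1_card (big_ord_recr_in addn) max_in_extend_set.
by congr (_ + _)%N; apply: eq_bigl => j; rewrite lift_max_in_extend_set.
Qed.

Definition extend_ffun (q : {ffun 'I_m -> bool} * bool) : {ffun 'I_m.+1 -> bool} :=
  [ffun i => if unlift ord_max i is Some j then q.1 j else q.2].

Definition restrict_ffun (e : {ffun 'I_m.+1 -> bool}) : {ffun 'I_m -> bool} * bool :=
  ([ffun j => e (lift ord_max j)], e ord_max).

Lemma extend_ffun_bij : bijective extend_ffun.
Proof.
exists restrict_ffun => [[e b]|e].
  by congr pair; [apply/ffunP => j|]; rewrite !ffunE ?liftK ?unlift_none.
by apply/ffunP => i; rewrite !ffunE; case: unliftP => [j ->|->]; rewrite ?ffunE.
Qed.

Lemma extend_ffun_lift q j : extend_ffun q (lift ord_max j) = q.1 j.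
Proof. by rewrite ffunE liftK. Qed.

Lemma extend_ffun_max q : extend_ffun q ord_max = q.2.
Proof. by rewrite ffunE unlift_none. Qed.

End ExtendOrd.

Arguments val_lift_max {m}.
Arguments extend_set {m}.
Arguments extend_ffun {m}.

Lemma extend_ffun_Gal m q : (extend_ffun q \in Gal m.+2) = (q.1 \in Gal m.+1).
Proof.
rewrite !inE; apply/forallP/forallP => H i.
  by have := H (lift ord_max i); rewrite extend_ffun_lift val_lift_max.
case: (unliftP ord_max i) => [j ->|->]; last by rewrite extend_ffun_max.
by rewrite extend_ffun_lift val_lift_max; apply: H.
Qed.

Lemma big_Gal_recr (R : Type) (idx : R) (op : Monoid.com_law idx) m
    (F : {ffun 'I_m.+2 -> bool} -> R) :
  \big[op/idx]_(e in Gal m.+2) F e =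
  \big[op/idx]_(e in Gal m.+1)
     op (F (extend_ffun (e, false))) (F (extend_ffun (e, true))).
Proof.
rewrite (reindex (@extend_ffun m.+1)); last exact/onW_bij/extend_ffun_bij.
rewrite (eq_bigl (fun q => q.1 \in Gal m.+1)) => [|q]; last by rewrite extend_ffun_Gal.
transitivity (\big[op/idx]_(e in Gal m.+1) \big[op/idx]_(b : bool) F (extend_ffun (e, b))).
  by rewrite pair_big; apply: eq_big => [[e b]|[e b] _]; rewrite ?andbT.
by apply: eq_bigr => e _; rewrite big_bool Monoid.mulmC.
Qed.

Section ParitySum.
Variable L : comNzRingType.

(* ec_parity m x v false and ec_parity m x v true are the cosine and sine of
   the sum of the angles with cosines x j and sines v j, j < m. *)
Definition ec_parity (m : nat) (x v : nat -> L) (p : bool) : L :=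
  \sum_(S : {set 'I_m} | odd #|S| == p)
     (-1) ^+ (#|S|./2) * \prod_(j in S) v (val j) * \prod_(j in ~: S) x (val j).

Lemma eq_ec_parity m x v v' p : (forall j : 'I_m, v (val j) = v' (val j)) ->
  ec_parity m x v p = ec_parity m x v' p.
Proof.
by move=> vv'; apply: eq_bigr => S _; congr (_ * _ * _); apply: eq_bigr => j _.
Qed.

Lemma ec_parity0 x v p : ec_parity 0 x v p = (~~ p)%:R.
Proof.
have set_ord0 (S : {set 'I_0}) : S = set0 by apply/setP => -[].
rewrite /ec_parity big_mkcond (big_pred1 set0) => [|S]; last by rewrite /= [S]set_ord0 eqxx.
by rewrite cards0 big_set0 setC0 big_ord0 !mulr1; case: p.
Qed.

Lemma prod_extend_set m (S : {set 'I_m}) b (f : nat -> L) :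
  \prod_(i in extend_set (S, b)) f (val i) =
  \prod_(j in S) f (val j) * (if b then f m else 1).
Proof.
rewrite big_ord_recr_in max_in_extend_set; congr (_ * _).
by apply: eq_big => j; rewrite ?lift_max_in_extend_set // val_lift_max.
Qed.

Lemma prod_setC_extend_set m (S : {set 'I_m}) b (f : nat -> L) :
  \prod_(i in ~: extend_set (S, b)) f (val i) =
  \prod_(j in ~: S) f (val j) * (if b then 1 else f m).
Proof.
rewrite big_ord_recr_in in_setC max_in_extend_set; congr (_ * _); last by case: b.
by apply: eq_big => j; rewrite ?in_setC ?lift_max_in_extend_set // val_lift_max.
Qed.

Lemma ec_paritySr m x v p :
  ec_parity m.+1 x v p =
  x m * ec_parity m x v p + (if p then v m else - v m) * ec_parity m x v (~~ p).
Proof.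
rewrite /ec_parity (reindex (@extend_set m)); last exact/onW_bij/extend_set_bij.
set T := fun S : {set 'I_m.+1} =>
  (-1) ^+ (#|S|./2) * \prod_(j in S) v (val j) * \prod_(j in ~: S) x (val j).
have -> : \sum_(q | odd #|extend_set q| == p) T (extend_set q) =
    \sum_(S : {set 'I_m}) \sum_(b : bool)
      (if odd #|extend_set (S, b)| == p then T (extend_set (S, b)) else 0).
  by rewrite pair_bigA big_mkcond; apply: eq_bigr => -[S b].
rewrite (big_mkcond (fun S : {set 'I_m} => odd #|S| == p)).
rewrite (big_mkcond (fun S : {set 'I_m} => odd #|S| == ~~ p)).
rewrite !mulr_sumr -big_split; apply: eq_bigr => S _.
rewrite big_bool /T !card_extend_set !prod_extend_set !prod_setC_extend_set.
rewrite addn1 addn0 -uphalfE uphalf_half exprD /=.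
by case: (odd #|S|); case: p => /=; ring.
Qed.

Lemma ec_parity_norm m x v : (forall i, (i < m)%N -> x i ^+ 2 + v i ^+ 2 = 1) ->
  ec_parity m x v false ^+ 2 + ec_parity m x v true ^+ 2 = 1.
Proof.
elim: m => [|m IHm] xv1; first by rewrite !ec_parity0 expr0n addr0 expr1n.
rewrite !ec_paritySr /=.
transitivity ((x m ^+ 2 + v m ^+ 2) *
              (ec_parity m x v false ^+ 2 + ec_parity m x v true ^+ 2)); first by ring.
by rewrite xv1 // IHm ?mul1r // => i /ltnW; apply: xv1.
Qed.

Lemma mul_sub1_conj (x y a b : L) :
  y ^+ 2 = 1 - x ^+ 2 -> a ^+ 2 + b ^+ 2 = 1 ->
  (x * a - y * b - 1) * (x * a + y * b - 1) = (x - a) ^+ 2.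
Proof.
move=> y2 ab1; have b2 : b ^+ 2 = 1 - a ^+ 2 by rewrite -ab1; ring.
transitivity ((x * a - 1) ^+ 2 - y ^+ 2 * b ^+ 2); first by ring.
by rewrite y2 b2; ring.
Qed.

End ParitySum.

Arguments ec_parity {L}.

Section SignTwist.
Variables (L : comNzRingType) (m : nat) (y : nat -> L).

Definition sign_twist (e : {ffun 'I_m -> bool}) (k : nat) : L :=
  if insub k : option 'I_m is Some j then sgnb (e j) * y k else y k.

Lemma sign_twistE e (j : 'I_m) : sign_twist e (val j) = sgnb (e j) * y (val j).
Proof. by rewrite /sign_twist valK. Qed.

Lemma sign_twist_sqr e k : sign_twist e k ^+ 2 = y k ^+ 2.
Proof.
rewrite /sign_twist; case: insub => // j.
by rewrite exprMn; case: (e j); rewrite ?sqrrN expr1n mul1r.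
Qed.

Lemma ECsigE (x : nat -> L) e : ECsig x y e = ec_parity m x (sign_twist e) false.
Proof.
apply: eq_big => [S|S _]; first by rewrite eqbF_neg.
by congr (_ * _ * _); apply: eq_bigr => j _; rewrite sign_twistE.
Qed.

End SignTwist.

Arguments sign_twist {L m}.

Lemma sign_twist_extend (L : comNzRingType) m (y : nat -> L)
    (e : {ffun 'I_m -> bool}) b (j : 'I_m) :
  sign_twist y (extend_ffun (e, b)) (val j) = sign_twist y e (val j).
Proof. by rewrite -{1}(val_lift_max j) !sign_twistE extend_ffun_lift val_lift_max. Qed.

Lemma ec_parity_sign_twist_extend (L : comNzRingType) m (x y : nat -> L)
    (e : {ffun 'I_m -> bool}) b p :
  ec_parity m x (sign_twist y (extend_ffun (e, b))) p = ec_parity m x (sign_twist y e) p.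
Proof. exact/eq_ec_parity/sign_twist_extend. Qed.

Lemma sign_twist_extend_max (L : comNzRingType) m (y : nat -> L)
    (e : {ffun 'I_m -> bool}) b :
  sign_twist y (extend_ffun (e, b)) m = sgnb b * y m.
Proof. by rewrite -[m]/(val (@ord_max m)) sign_twistE extend_ffun_max. Qed.

Theorem mainTheorem2 (L : comNzRingType) (n : nat) (x y : nat -> L) :
  (2 <= n)%N ->
  (forall i, (i < n)%N -> y i ^+ 2 = 1 - x i ^+ 2) ->
  Cn n x y = Pn n x y ^+ 2.
Proof.
case: n => [|[|m]] // _ y2.
rewrite /Cn /Pn big_Gal_recr -prodrXl; apply: eq_bigr => e _ /=.
have ab1 := @ec_parity_norm _ m.+1 x (sign_twist y e).
rewrite !ECsigE !(ec_paritySr m.+1) /= -(mul_sub1_conj (y2 m.+1 _) (ab1 _)) //.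
- rewrite !ec_parity_sign_twist_extend !sign_twist_extend_max.
  by rewrite mul1r mulN1r opprK mulNr.
- by move=> i lt_im; rewrite sign_twist_sqr y2 ?subrKC // leqW.
Qed.
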